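(* Let $G$ be a finite connected simple graph, $H$ a finite tree, and $\Delta$ a triangulation of $G\times H$. Then every Cartier divisor on $\Delta$ is linearly equivalent (i.e. differs by a principal divisor) to a Cartier divisor that vanishes on every diagonal edge of $\Delta$. The same holds with the roles of $G$ and $H$ exchanged.
   Context: Triangulated product: $\Delta$ has vertex set $V(G)\times V(H)$; horizontal edges $\{(a,b),(x,b)\}$ ($ax\in E(G)$, $b\in V(H)$); vertical edges $\{(a,b),(a,y)\}$ ($a\in V(G)$, $by\in E(H)$); for each $ax\in E(G)$, $by\in E(H)$ the square $(a,b),(x,b),(x,y),(a,y)$ is split by one chosen diagonal edge into two triangles. For a triangle $\sigma$, $\mathrm{diag}(\sigma)$ is its diagonal edge. $\alpha(e,v)=1$ if $v\in e$, $e$ diagonal; $\alpha(e,v)=|\{\text{triangles }\sigma\supset e: v\notin\mathrm{diag}(\sigma)\}|$ if $v\in e$, $e$ not diagonal; $0$ if $v\notin e$. For $\phi:V(\Delta)\to\mathbb{Z}$, $\operatorname{Div}(\phi)=\sum_{r}\big(\sum_{\sigma\supset r}\phi(\sigma\setminus r)-\sum_{u\in r}\alpha(r,u)\phi(u)\big)[r]$; principal divisors are those of this form. A divisor $D$ on $\Delta$ (formal $\mathbb{Z}$-combination of edges) is Cartier if for every vertex $v$ some $\phi$ satisfies $D(r)=\operatorname{Div}(\phi)(r)$ for all edges $r\ni v$. *)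

From HB Require Import structures.
From mathcomp Require Import all_boot all_order all_algebra.
Set Implicit Arguments. Unset Strict Implicit. Unset Printing Implicit Defensive.
Import Order.TTheory GRing.Theory Num.Theory.
Local Open Scope ring_scope.

Definition simple_graph (X : finType) (r : rel X) : Prop :=
  symmetric r /\ irreflexive r.

Definition connected_graph (X : finType) (r : rel X) : Prop :=
  (0 < #|X|)%N /\ forall x y : X, connect r x y.

Definition tree (X : finType) (r : rel X) : Prop :=
  connected_graph r /\
  forall s : seq X, uniq s -> (2 < size s)%N -> ~~ cycle r s.

Section TriangulatedProduct.
Variables (T U : finType) (e : rel T) (f : rel U).
Variable Dg : rel (T * U).

(* Dg is a triangulation of the product G x H: it is symmetric, only joins
   opposite corners of squares, and each square {a,x} x {b,y} gets exactly one
   of its two diagonals. *)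
Definition triangulation : Prop :=
  [/\ symmetric Dg,
      (forall u v, Dg u v -> e u.1 v.1 && f u.2 v.2) &
      (forall a x b y, e a x -> f b y -> Dg (a, b) (x, y) = ~~ Dg (x, b) (a, y))].

Definition adjD (u v : T * U) : bool :=
  [|| (u.2 == v.2) && e u.1 v.1, (u.1 == v.1) && f u.2 v.2 | Dg u v].

Definition is_edge (r : {set T * U}) : bool :=
  [exists u, exists v, adjD u v && (r == [set u; v])].

Definition is_diag (r : {set T * U}) : bool :=
  [exists u, exists v, Dg u v && (r == [set u; v])].

(* The two triangles of the square (a,b),(x,b),(x,y),(a,y) split by the
   diagonal {(a,b),(x,y)}. *)
Definition is_triangle (s : {set T * U}) : bool :=
  [exists a, exists x, exists b, exists y,
    [&& e a x, f b y, Dg (a, b) (x, y) &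
        (s == [set (a, b); (x, y); (x, b)]) || (s == [set (a, b); (x, y); (a, y)])]].

Definition diag_of (s : {set T * U}) : {set T * U} :=
  [set u in s | [exists w in s, Dg u w]].

Definition alpha (r : {set T * U}) (v : T * U) : int :=
  if v \notin r then 0
  else if is_diag r then 1
  else (#|[set s | is_triangle s && (r \subset s) && (v \notin diag_of s)]|)%:Z.

(* Div(phi)(r); phi(sigma \ r) is written as the sum of phi over the
   (one-element) set sigma :\: r. *)
Definition Div (phi : T * U -> int) (r : {set T * U}) : int :=
  if is_edge r then
    \sum_(s | is_triangle s && (r \subset s)) \sum_(w in s :\: r) phi w
    - \sum_(u in r) alpha r u * phi u
  else 0.

Definition is_divisor (D : {set T * U} -> int) : Prop :=
  forall r, ~~ is_edge r -> D r = 0.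

Definition principal (D : {set T * U} -> int) : Prop :=
  exists phi : T * U -> int, forall r, D r = Div phi r.

Definition lin_equiv (D D' : {set T * U} -> int) : Prop :=
  principal (fun r => D r - D' r).

Definition cartier (D : {set T * U} -> int) : Prop :=
  forall v : T * U, exists phi : T * U -> int,
    forall r, is_edge r -> v \in r -> D r = Div phi r.

Definition vanishes_on_diagonals (D : {set T * U} -> int) : Prop :=
  forall r, is_diag r -> D r = 0.

End TriangulatedProduct.

(* Near each vertex v a Cartier divisor is D = Div(phi_v), so on a diagonal {(a,b),(x,y)} it equals
   phi_(a,b)(x,b) + phi_(a,b)(a,y) - phi_(a,b)(a,b) - phi_(a,b)(x,y).  It suffices to find ONE global
   phi with this property for all diagonals: D - Div(phi) is then Cartier, linearly equivalent to D and
   zero on the diagonals.  Assume H is the tree.  Fix an edge ax of G; the signed value of D on the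
   diagonal of the square {a,x} x {c,z} is a flow on the edge cz of H.  Comparing the two local
   descriptions of D on the horizontal edge {(a,c),(x,c)} shows that the divergence of this flow at c is
   star_c(a) - star_c(x) for an explicit function star_c on G.  On a tree the flow through an edge by is
   the divergence summed over the y-side of the edge, so summing the star_c over the sides of the edges
   of H produces phi.  The case where G is the tree is the same argument on the transposed product. *)

From HB Require Import structures.
From mathcomp Require Import all_boot all_order all_algebra ring zify.
From Stdlib Require Import IndefiniteDescription.
Set Implicit Arguments. Unset Strict Implicit. Unset Printing Implicit Defensive.
Import Order.TTheory GRing.Theory Num.Theory.
Local Open Scope ring_scope.

Ltac case_eqs := repeat match goal with
 | H : is_true (_ || _) |- _ => case/orP: H => H
 | H : is_true (_ && _) |- _ => let H' := fresh "H" in case/andP: H => H H'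
 | H : is_true ((_,_) == (_,_)) |- _ => rewrite xpair_eqE in H
 | H : is_true (_ == _) |- _ => move/eqP: H => H; subst
 end.

Ltac set_perm := apply/setP => ?; rewrite !inE; by do ![case: (_ == _)].

Lemma setU1D (X : finType) (w : X) (r : {set X}) : w \notin r -> (w |: r) :\: r = [set w].
Proof.
move=> wr; apply/setP => z; rewrite !inE.
by case: (z =P w) => [->|] //=; [rewrite wr | case: (z \in r)].
Qed.

Lemma subset_set2 (X : finType) (u v : X) (s : {set X}) : ([set u; v] \subset s) = (u \in s) && (v \in s).
Proof.
apply/subsetP/andP => [sub | [us vs] z]; first by split; apply: sub; rewrite !inE eqxx ?orbT.
by rewrite !inE => /orP[] /eqP ->.
Qed.

Section TriangulatedProductDiv.
Variables (T U : finType) (e : rel T) (f : rel U) (Dg : rel (T * U)).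

Lemma is_edge_set2 u v : adjD e f Dg u v -> is_edge e f Dg [set u; v].
Proof. by move=> h; apply/existsP; exists u; apply/existsP; exists v; rewrite h eqxx. Qed.

Lemma DivB phi psi r : Div e f Dg (fun w => phi w - psi w) r = Div e f Dg phi r - Div e f Dg psi r.
Proof.
rewrite /Div; case: ifP => _; last by rewrite subr0.
under eq_bigr => s _ do rewrite sumrB.
under [X in _ - X]eq_bigr => u _ do rewrite mulrBr.
rewrite !sumrB; ring.
Qed.

Lemma Div_nondiag phi r : is_edge e f Dg r -> ~~ is_diag Dg r ->
  Div e f Dg phi r = \sum_(s | is_triangle e f Dg s && (r \subset s))
     (\sum_(w in s :\: r) phi w - \sum_(u in r) (u \notin diag_of Dg s)%:R * phi u).
Proof.
move=> er ndr; rewrite /Div er sumrB exchange_big /=; congr (_ - _).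
apply: eq_bigr => u ur; rewrite /alpha ur (negbTE ndr) /= -mulr_suml; congr (_ * _).
rewrite -sum1_card -natz natr_sum big_mkcond [RHS]big_mkcond /=.
apply: eq_bigr => s _; rewrite inE.
by case: (is_triangle e f Dg s && (r \subset s)) => //=; case: (u \notin _).
Qed.

Lemma Div_diag phi r : is_edge e f Dg r -> is_diag Dg r ->
  Div e f Dg phi r = \sum_(s | is_triangle e f Dg s && (r \subset s))
     (\sum_(w in s :\: r) phi w) - \sum_(u in r) phi u.
Proof. by move=> er dr; rewrite /Div er; congr (_ - _); apply: eq_bigr => u ur; rewrite /alpha ur dr mul1r. Qed.

Hypotheses (e_sym : symmetric e) (e_irr : irreflexive e).
Hypotheses (f_sym : symmetric f) (f_irr : irreflexive f).
Hypotheses (Dg_sym : symmetric Dg)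
  (Dg_square : forall u v, Dg u v -> e u.1 v.1 && f u.2 v.2)
  (Dg_flip : forall a x b y, e a x -> f b y -> Dg (a, b) (x, y) = ~~ Dg (x, b) (a, y)).

Lemma Dg_vertical a b y : Dg (a, b) (a, y) = false.
Proof. by apply/negbTE/negP => /Dg_square /andP[/=]; rewrite e_irr. Qed.

Lemma Dg_horizontal a b x : Dg (a, b) (x, b) = false.
Proof. by apply/negbTE/negP => /Dg_square /andP[_ /=]; rewrite f_irr. Qed.

Lemma Dg_irr u : Dg u u = false.
Proof. by apply/negbTE/negP => /Dg_square /andP[/=]; rewrite e_irr. Qed.

Lemma Dg_flip_other a x b y : e a x -> f b y -> ~~ Dg (a, b) (x, y) -> Dg (x, b) (a, y).
Proof. by move=> eax fby; rewrite (Dg_flip eax fby) negbK. Qed.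

Lemma triangle_of_square a x b y : e a x -> f b y -> Dg (a, b) (x, y) ->
  is_triangle e f Dg [set (a, b); (x, y); (x, b)] &&
  is_triangle e f Dg [set (a, b); (x, y); (a, y)].
Proof.
by move=> eax fby D; apply/andP; split; apply/existsP; exists a; apply/existsP; exists x;
  apply/existsP; exists b; apply/existsP; exists y; rewrite eax fby D eqxx ?orbT.
Qed.

Lemma triangleP s : is_triangle e f Dg s ->
  exists a x b y, [/\ e a x, e x a, f b y, f y b &
   [/\ Dg (a, b) (x, y), Dg (x, y) (a, b), Dg (x, b) (a, y) = false, Dg (a, y) (x, b) = false &
       (s = [set (a, b); (x, y); (x, b)]) \/ (s = [set (a, b); (x, y); (a, y)])]].
Proof.
case/existsP=> a /existsP[x /existsP[b /existsP[y /and4P[eax fby D Es]]]].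
exists a, x, b, y; have nD : Dg (x, b) (a, y) = false by apply/negbTE; rewrite -(Dg_flip eax fby).
rewrite [e x a]e_sym [f y b]f_sym [Dg (x, y) _]Dg_sym [Dg (a, y) _]Dg_sym.
by split=> //; split=> //; case/orP: Es => /eqP; [left | right].
Qed.

Lemma triangles_on_horizontal a x b s : e a x ->
  (is_triangle e f Dg s && ([set (a, b); (x, b)] \subset s)) =
  (s \in [set (if Dg (a, b) (x, y) then [set (a, b); (x, y); (x, b)]
               else [set (x, b); (a, y); (a, b)]) | y in [set y | f b y]]).
Proof.
move=> eax; have nax : a != x by apply: contraTneq eax => ->; rewrite e_irr.
apply/idP/idP.
- rewrite subset_set2 => /and3P[/triangleP[a' [x' [b' [y' [ea ea' fb fb' [D D' nD nD' Es]]]]]] h1 h2].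
  case: Es => Es; subst s; apply/imsetP; [exists y' | exists b'];
  rewrite !inE !xpair_eqE in h1 h2; case_eqs;
  rewrite ?eqxx ?e_irr ?f_irr // in nax ea fb ea' fb' *; rewrite ?inE // ?D ?nD ?D' ?nD'; set_perm.
- case/imsetP => y; rewrite inE => fby ->; rewrite subset_set2.
  case: ifP => D.
    by case/andP: (triangle_of_square eax fby D) => -> _; rewrite !inE !eqxx ?orbT.
  have exa : e x a by rewrite e_sym.
  have D' := Dg_flip_other eax fby (negbT D).
  by case/andP: (triangle_of_square exa fby D') => -> _; rewrite !inE !eqxx ?orbT.
Qed.

Lemma triangles_on_vertical a b y s : f b y ->
  (is_triangle e f Dg s && ([set (a, b); (a, y)] \subset s)) =
  (s \in [set (if Dg (a, b) (x, y) then [set (a, b); (x, y); (a, y)]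
               else [set (x, b); (a, y); (a, b)]) | x in [set x | e a x]]).
Proof.
move=> fby; have nby : b != y by apply: contraTneq fby => ->; rewrite f_irr.
apply/idP/idP.
- rewrite subset_set2 => /and3P[/triangleP[a' [x' [b' [y' [ea ea' fb fb' [D D' nD nD' Es]]]]]] h1 h2].
  case: Es => Es; subst s; apply/imsetP; [exists a' | exists x'];
  rewrite !inE !xpair_eqE in h1 h2; case_eqs;
  rewrite ?eqxx ?e_irr ?f_irr // in nby ea fb ea' fb' *; rewrite ?inE // ?D ?nD ?D' ?nD'; set_perm.
- case/imsetP => x; rewrite inE => eax ->; rewrite subset_set2.
  case: ifP => D.
    by case/andP: (triangle_of_square eax fby D) => _ ->; rewrite !inE !eqxx ?orbT.
  have exa : e x a by rewrite e_sym.
  have D' := Dg_flip_other eax fby (negbT D).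
  by case/andP: (triangle_of_square exa fby D') => -> _; rewrite !inE !eqxx ?orbT.
Qed.

Lemma triangles_on_diagonal a x b y s : e a x -> f b y -> Dg (a, b) (x, y) ->
  (is_triangle e f Dg s && ([set (a, b); (x, y)] \subset s)) =
  (s \in [set [set (a, b); (x, y); (x, b)]; [set (a, b); (x, y); (a, y)]]).
Proof.
move=> eax fby D0.
have nax : a != x by apply: contraTneq eax => ->; rewrite e_irr.
have nby : b != y by apply: contraTneq fby => ->; rewrite f_irr.
apply/idP/idP.
- rewrite subset_set2 => /and3P[/triangleP[a' [x' [b' [y' [ea ea' fb fb' [D D' nD nD' Es]]]]]] h1 h2].
  case: Es => Es; subst s; rewrite !inE !xpair_eqE in h1 h2; case_eqs;
  rewrite ?eqxx ?e_irr ?f_irr // ?D ?nD ?D' ?nD' in nby nax ea fb ea' fb' D0 *; rewrite !inE;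
  apply/orP; first [left; apply/eqP; set_perm | right; apply/eqP; set_perm].
- case/andP: (triangle_of_square eax fby D0) => t1 t2.
  by rewrite subset_set2 !inE => /orP[] /eqP ->; rewrite ?t1 ?t2 !inE !eqxx ?orbT.
Qed.


Lemma not_diag_horizontal a x b : ~~ is_diag Dg [set (a, b); (x, b)].
Proof.
apply/existsP => -[u /existsP[v /andP[D /eqP E]]].
have /[!inE] hu : u \in [set (a, b); (x, b)] by rewrite E !inE eqxx.
have /[!inE] hv : v \in [set (a, b); (x, b)] by rewrite E !inE eqxx orbT.
by move: hu hv D => /orP[]/eqP-> /orP[]/eqP->; rewrite Dg_horizontal.
Qed.

Lemma not_diag_vertical a b y : ~~ is_diag Dg [set (a, b); (a, y)].
Proof.
apply/existsP => -[u /existsP[v /andP[D /eqP E]]].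
have /[!inE] hu : u \in [set (a, b); (a, y)] by rewrite E !inE eqxx.
have /[!inE] hv : v \in [set (a, b); (a, y)] by rewrite E !inE eqxx orbT.
by move: hu hv D => /orP[]/eqP-> /orP[]/eqP->; rewrite Dg_vertical.
Qed.

(* Over a non-diagonal edge {u, v}, in the triangle with diagonal {w, u} only [v] has [alpha = 1]. *)
Lemma Div_triangle_term (phi : T * U -> int) u v w : u != v -> w \notin [set u; v] ->
  Dg w u -> ~~ Dg u v -> ~~ Dg v w ->
  \sum_(z in (w |: [set u; v]) :\: [set u; v]) phi z
    - \sum_(z in [set u; v]) (z \notin diag_of Dg (w |: [set u; v]))%:R * phi z
  = phi w - phi v.
Proof.
move=> nuv nwr Dwu nDuv nDvw.
have u_diag : u \in diag_of Dg (w |: [set u; v]).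
  by rewrite inE !inE eqxx orbT /=; apply/existsP; exists w; rewrite !inE eqxx Dg_sym Dwu.
have v_diag : v \notin diag_of Dg (w |: [set u; v]).
  rewrite inE negb_and orbC; apply/orP; left; apply/existsP => -[z /andP[]].
  by rewrite !inE => /or3P[] /eqP ->; [exact/negP | rewrite Dg_sym; exact/negP | rewrite Dg_irr].
rewrite setU1D // big_set1 big_setU1 ?big_set1 /=; last by rewrite inE.
by rewrite u_diag (negbTE v_diag) /=; ring.
Qed.

Definition horizontal_div a x b (phi : T * U -> int) : int :=
  \sum_(y | f b y) (if Dg (a, b) (x, y) then phi (x, y) - phi (x, b) else phi (a, y) - phi (a, b)).

Lemma Div_horizontal phi a x b : e a x ->
  Div e f Dg phi [set (a, b); (x, b)] = horizontal_div a x b phi.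
Proof.
move=> eax.
have nax : (a == x) = false by apply/negbTE; apply: contraTneq eax => ->; rewrite e_irr.
have nxa : (x == a) = false by rewrite eq_sym.
have er : is_edge e f Dg [set (a, b); (x, b)] by apply: is_edge_set2; rewrite /adjD /= eqxx eax.
rewrite (Div_nondiag _ er (not_diag_horizontal _ _ _)).
rewrite (eq_bigl _ _ (fun s => triangles_on_horizontal b s eax)) big_imset /=; last first.
  move=> y1 y2; rewrite !inE => f1 f2 E.
  have nb1 : (y1 == b) = false by apply/negbTE; apply: contraTneq f1 => ->; rewrite f_irr.
  have /setP/(_ (x, y1)) := E; have /setP/(_ (a, y1)) := E.
  case: ifP => _; case: ifP => _; rewrite !inE !xpair_eqE !eqxx /= ?nb1 ?nax ?nxa /= ?orbF ?andbF //=;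
  first [by move=> _ /esym/eqP | by move=> /esym/eqP].
apply: eq_big => [y|y]; first by rewrite inE.
rewrite inE => fby.
have nyb : (y == b) = false by apply/negbTE; apply: contraTneq fby => ->; rewrite f_irr.
case: ifP => D.
- rewrite (_ : [set (a, b); (x, y); (x, b)] = (x, y) |: [set (a, b); (x, b)]); last by set_perm.
  apply: Div_triangle_term; rewrite ?Dg_horizontal ?Dg_vertical 1?Dg_sym //.
  + by rewrite xpair_eqE nax.
  + by rewrite !inE !xpair_eqE nyb !andbF.
- have D' := Dg_flip_other eax fby (negbT D).
  rewrite [[set (a, b); (x, b)]]setUC.
  rewrite (_ : [set (x, b); (a, y); (a, b)] = (a, y) |: [set (x, b); (a, b)]); last by set_perm.
  apply: Div_triangle_term; rewrite ?Dg_horizontal ?Dg_vertical 1?Dg_sym //.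
  + by rewrite xpair_eqE nxa.
  + by rewrite !inE !xpair_eqE nyb !andbF.
Qed.

Lemma Div_vertical phi a b y : f b y ->
  Div e f Dg phi [set (a, b); (a, y)] =
  \sum_(x | e a x) (if Dg (a, b) (x, y) then phi (x, y) - phi (a, y) else phi (x, b) - phi (a, b)).
Proof.
move=> fby.
have nby : (b == y) = false by apply/negbTE; apply: contraTneq fby => ->; rewrite f_irr.
have nyb : (y == b) = false by rewrite eq_sym.
have er : is_edge e f Dg [set (a, b); (a, y)] by apply: is_edge_set2; rewrite /adjD /= eqxx fby orbT.
rewrite (Div_nondiag _ er (not_diag_vertical _ _ _)).
rewrite (eq_bigl _ _ (fun s => triangles_on_vertical a s fby)) big_imset /=; last first.
  move=> x1 x2; rewrite !inE => e1 e2 E.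
  have na1 : (x1 == a) = false by apply/negbTE; apply: contraTneq e1 => ->; rewrite e_irr.
  have /setP/(_ (x1, y)) := E; have /setP/(_ (x1, b)) := E.
  case: ifP => _; case: ifP => _; rewrite !inE !xpair_eqE !eqxx /= ?na1 ?nby ?nyb /= ?orbF ?andbF ?andbT //=;
  first [by move=> _ /esym/eqP | by move=> /esym/eqP].
apply: eq_big => [x|x]; first by rewrite inE.
rewrite inE => eax.
have nxa : (x == a) = false by apply/negbTE; apply: contraTneq eax => <-; rewrite e_irr.
case: ifP => D.
- rewrite (_ : [set (a, b); (x, y); (a, y)] = (x, y) |: [set (a, b); (a, y)]); last by set_perm.
  apply: Div_triangle_term; rewrite ?Dg_horizontal ?Dg_vertical 1?Dg_sym //.
  + by rewrite xpair_eqE nby andbF.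
  + by rewrite !inE !xpair_eqE nxa.
- have D' := Dg_flip_other eax fby (negbT D).
  rewrite [[set (a, b); (a, y)]]setUC.
  rewrite (_ : [set (x, b); (a, y); (a, b)] = (x, b) |: [set (a, y); (a, b)]); last by set_perm.
  apply: Div_triangle_term; rewrite ?Dg_horizontal ?Dg_vertical //.
  + by rewrite xpair_eqE nyb andbF.
  + by rewrite !inE !xpair_eqE nxa.
Qed.

Lemma Div_diagonal phi a x b y : e a x -> f b y -> Dg (a, b) (x, y) ->
  Div e f Dg phi [set (a, b); (x, y)] = phi (x, b) + phi (a, y) - phi (a, b) - phi (x, y).
Proof.
move=> eax fby D.
have nby : (b == y) = false by apply/negbTE; apply: contraTneq fby => ->; rewrite f_irr.
have nax : (a == x) = false by apply/negbTE; apply: contraTneq eax => ->; rewrite e_irr.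
have nyb : (y == b) = false by rewrite eq_sym.
have nxa : (x == a) = false by rewrite eq_sym.
have dr : is_diag Dg [set (a, b); (x, y)].
  by apply/existsP; exists (a, b); apply/existsP; exists (x, y); rewrite D eqxx.
have er : is_edge e f Dg [set (a, b); (x, y)] by apply: is_edge_set2; rewrite /adjD /= D !orbT.
rewrite (Div_diag _ er dr).
rewrite (eq_bigl _ _ (fun s => triangles_on_diagonal s eax fby D)).
rewrite big_setU1 /=; last first.
  by apply/negP; rewrite inE => /eqP/setP/(_ (x, b)); rewrite !inE !xpair_eqE !eqxx nxa nby ?andbF.
rewrite big_set1.
rewrite {1}(_ : [set (a, b); (x, y); (x, b)] = (x, b) |: [set (a, b); (x, y)]); last by set_perm.
rewrite {1}(_ : [set (a, b); (x, y); (a, y)] = (a, y) |: [set (a, b); (x, y)]); last by set_perm.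
rewrite !setU1D; try by rewrite !inE !xpair_eqE ?nax ?nxa ?nyb ?nby ?andbF.
rewrite !big_set1 big_setU1 /= ?big_set1; last by rewrite inE xpair_eqE nax.
ring.
Qed.

End TriangulatedProductDiv.

Lemma sum_antisym (X : finType) (G : X -> X -> int) :
  (forall c z, G z c = - G c z) -> \sum_c \sum_z G c z = 0.
Proof.
move=> G_anti.
have E : \sum_c \sum_z G c z = - \sum_c \sum_z G c z.
  rewrite {1}exchange_big -sumrN; apply: eq_bigr => z _.
  by rewrite -sumrN; apply: eq_bigr => c _.
lia.
Qed.

Section BridgeSides.
Variables (U : finType) (f : rel U).

Definition del_edge (b y : U) : rel U :=
  [rel u v | f u v && ~~ (((u == b) && (v == y)) || ((u == y) && (v == b)))].

Definition side (b y : U) : {set U} := [set c | connect (del_edge b y) y c].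

Lemma side_boundary b y c z :
  c \in side b y -> f c z -> z \notin side b y ->
  ((c == b) && (z == y)) || ((c == y) && (z == b)).
Proof.
rewrite !inE => yc fcz; apply: contraNT => nbyz.
by apply: connect_trans yc (connect1 _); rewrite /del_edge /= fcz nbyz.
Qed.

Lemma side_other_edge b y b' y' : symmetric f -> f b' y' ->
  ~~ (((b == b') && (y == y')) || ((b == y') && (y == b'))) ->
  (y' \in side b y) = (b' \in side b y).
Proof.
move=> f_sym fby' nbyb'.
have other_edge : ~~ (((b' == b) && (y' == y)) || ((b' == y) && (y' == b))).
  by apply: contra nbyb'; case/orP => /andP[/eqP-> /eqP->]; rewrite !eqxx ?orbT.
have del_by : del_edge b y b' y' by rewrite /del_edge /= fby'.
have del_yb : del_edge b y y' b'.
  rewrite /del_edge /= f_sym fby' /=; apply: contra other_edge.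
  by case/orP => /andP[/eqP-> /eqP->]; rewrite !eqxx ?orbT.
by rewrite !inE; apply/idP/idP => h; apply: connect_trans h (connect1 _).
Qed.

Lemma side_tree_edge b y :
  irreflexive f -> (forall s : seq U, uniq s -> (2 < size s)%N -> ~~ cycle f s) ->
  f b y -> b \notin side b y.
Proof.
move=> f_irr f_acyclic fby; rewrite inE; apply/negP => /connectP[p p_path p_last].
case/shortenP: p_path p_last => p' p'_path p'_uniq _ p'_last.
have nby : b != y by apply: contraTneq fby => ->; rewrite f_irr.
case: p' p'_path p'_uniq p'_last => [|c [|c' q]] p'_path p'_uniq p'_last.
- by move: nby; rewrite p'_last eqxx.
- by move: p'_last p'_path => /= <-; rewrite /del_edge /= !eqxx /= orbT andbF.
- apply: (negP (f_acyclic _ p'_uniq _)) => //.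
  rewrite /cycle rcons_path -p'_last fby andbT.
  by apply: sub_path p'_path => u v /andP[].
Qed.

Lemma bridge_flux (F : U -> U -> int) b y : symmetric f -> f b y -> b \notin side b y ->
  (forall c z, f c z -> F z c = - F c z) ->
  \sum_(c in side b y) \sum_(z | f c z) F c z = F y b.
Proof.
move=> f_sym fby nbC F_anti; set C := side b y.
have yC : y \in C by rewrite inE connect0.
have crossing c z : c \in C -> f c z -> z \notin C -> (c == y) && (z == b).
  move=> cC fcz zC; case/orP: (side_boundary cC fcz zC) => /andP[/eqP ec zy]; last by rewrite ec eqxx zy.
  by move: cC; rewrite ec (negbTE nbC).
under eq_bigr => c _ do rewrite (bigID (fun z => z \in C)) /=.
rewrite big_split /=.
have inner : \sum_(c in C) \sum_(z | f c z && (z \in C)) F c z = 0.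
  rewrite -[RHS](@sum_antisym _ (fun c z => if (c \in C) && (f c z && (z \in C)) then F c z else 0)).
    rewrite big_mkcond /=; apply: eq_bigr => c _.
    by case: (c \in C) => /=; [rewrite big_mkcond | rewrite big1].
  move=> c z; have -> : (z \in C) && (f z c && (c \in C)) = (c \in C) && (f c z && (z \in C)).
    by rewrite [f z c]f_sym; apply/and3P/and3P => -[? ? ?].
  by case: ifP => [/and3P[_ /F_anti -> _]|_]; rewrite ?oppr0.
have outer : \sum_(c in C) \sum_(z | f c z && (z \notin C)) F c z = F y b.
  rewrite (bigD1 y) //= [X in _ + X]big1 ?addr0.
    apply: big_pred1 => z; apply/idP/eqP => [/andP[fyz zC]|->].
      by case/andP: (crossing _ _ yC fyz zC) => _ /eqP.
    by rewrite f_sym fby nbC.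
  move=> c /andP[cC ncy]; apply: big1 => z /andP[fcz zC].
  by move: (crossing _ _ cC fcz zC); rewrite (negbTE ncy).
by rewrite inner outer add0r.
Qed.

End BridgeSides.

Section DiagonalPotential.
Variables (T U : finType) (e : rel T) (f : rel U) (Dg : rel (T * U)).
(* [d p q] plays the role of D on the diagonal {p, q}, and [pot a b] that of the local potential at (a, b). *)
Variables (d : T * U -> T * U -> int) (pot : T -> U -> T * U -> int).

Hypotheses (e_sym : symmetric e) (f_sym : symmetric f) (f_irr : irreflexive f)
  (f_acyclic : forall s : seq U, uniq s -> (2 < size s)%N -> ~~ cycle f s).
Hypotheses (Dg_sym : symmetric Dg)
  (Dg_flip : forall a x b y, e a x -> f b y -> Dg (a, b) (x, y) = ~~ Dg (x, b) (a, y)).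
Hypothesis d_sym : forall p q, d p q = d q p.
Hypothesis d_pot : forall a x b y, e a x -> f b y -> Dg (a, b) (x, y) ->
  d (a, b) (x, y) = pot a b (x, b) + pot a b (a, y) - pot a b (a, b) - pot a b (x, y).
Hypothesis pot_horizontal : forall a x c, e a x ->
  horizontal_div f Dg a x c (pot a c) = horizontal_div f Dg a x c (pot x c).

Definition flux c z a x : int :=
  if Dg (a, c) (x, z) then d (a, c) (x, z) else - d (x, c) (a, z).

Definition star c a : int := \sum_(z | f c z) (pot a c (a, z) - pot a c (a, c)).

Definition side_star b y a : int := \sum_(c in side f b y) star c a.

Lemma flux_antisym a x c z : e a x -> f c z -> flux z c a x = - flux c z a x.
Proof.
move=> eax fcz; have fzc : f z c by rewrite f_sym.
rewrite /flux (Dg_flip eax fzc) (Dg_sym (x, z)).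
by case: (Dg (a, c) (x, z)); rewrite /= ?opprK d_sym.
Qed.

Lemma star_coboundary a x c : e a x ->
  star c a - star c x = \sum_(z | f c z) flux c z a x.
Proof.
move=> eax; have exa : e x a by rewrite e_sym.
have Ea : horizontal_div f Dg a x c (pot a c) =
    star c a - \sum_(z | f c z) (if Dg (a, c) (x, z) then d (a, c) (x, z) else 0).
  rewrite /star -sumrB; apply: eq_bigr => z fcz.
  by case: ifP => D; [rewrite (d_pot eax fcz D); ring | rewrite subr0].
have Ex : horizontal_div f Dg a x c (pot x c) =
    star c x - \sum_(z | f c z) (if Dg (a, c) (x, z) then 0 else d (x, c) (a, z)).
  rewrite /star -sumrB; apply: eq_bigr => z fcz.
  case: ifP => D; first by rewrite subr0.
  have D' : Dg (x, c) (a, z) by rewrite -[Dg _ _]negbK -(Dg_flip eax fcz) D.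
  by rewrite (d_pot exa fcz D'); ring.
have Eflux : \sum_(z | f c z) flux c z a x =
    \sum_(z | f c z) (if Dg (a, c) (x, z) then d (a, c) (x, z) else 0) -
    \sum_(z | f c z) (if Dg (a, c) (x, z) then 0 else d (x, c) (a, z)).
  by rewrite -sumrB; apply: eq_bigr => z _; rewrite /flux; case: ifP => _; ring.
have := pot_horizontal c eax; rewrite Ea Ex Eflux; lia.
Qed.

Lemma side_star_coboundary b y a x : f b y -> e a x ->
  side_star b y a - side_star b y x = flux y b a x.
Proof.
move=> fby eax; rewrite /side_star -sumrB.
under eq_bigr => c _ do rewrite (star_coboundary c eax).
apply: (bridge_flux (F := fun c z => flux c z a x)) => // [|c z]; first exact: side_tree_edge.
exact: flux_antisym.
Qed.

Definition oriented_edge (p : U * U) : bool := f p.1 p.2 && (enum_rank p.1 < enum_rank p.2)%N.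

Definition diag_potential (q : T * U) : int :=
  \sum_(p | oriented_edge p) (q.2 \notin side f p.1 p.2)%:R * side_star p.1 p.2 q.1.

Lemma diag_potential_square a x b y : e a x -> f b y ->
  diag_potential (x, b) + diag_potential (a, y) - diag_potential (a, b) - diag_potential (x, y)
  = flux b y a x.
Proof.
wlog lt_by : b y / (enum_rank b < enum_rank y)%N => [wlog_by eax fby|eax fby].
  have nby : b != y by apply: contraTneq fby => ->; rewrite f_irr.
  case: (ltngtP (enum_rank b) (enum_rank y)) => [lt_by|lt_yb|/ord_inj/enum_rank_inj eby].
  - exact: wlog_by.
  - have fyb : f y b by rewrite f_sym.
    by rewrite (flux_antisym eax fyb) -(wlog_by y b) //; ring.
  - by rewrite eby eqxx in nby.
pose jump (p : U * U) : int := (y \notin side f p.1 p.2)%:R - (b \notin side f p.1 p.2)%:R.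
have jump0 p : ~~ (((p.1 == b) && (p.2 == y)) || ((p.1 == y) && (p.2 == b))) -> jump p = 0.
  by move=> np; rewrite /jump (side_other_edge f_sym fby np) subrr.
have jump1 : jump (b, y) = -1.
  by rewrite /jump /= (side_tree_edge f_irr f_acyclic fby) inE connect0.
transitivity (\sum_(p | oriented_edge p) jump p * (side_star p.1 p.2 a - side_star p.1 p.2 x)).
  rewrite /diag_potential -big_split -!sumrB /=; apply: eq_bigr => p _; rewrite /jump; ring.
rewrite (bigD1 (b, y)) /=; last by rewrite /oriented_edge fby lt_by.
rewrite big1 ?addr0.
  by rewrite jump1 (side_star_coboundary fby eax) (flux_antisym eax fby); ring.
move=> p /andP[/andP[fp lt_p] np]; rewrite jump0 ?mul0r //.
apply/negP => /orP[] /andP[/eqP p1 /eqP p2].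
  by move: np; rewrite -p1 -p2 -surjective_pairing eqxx.
by move: lt_p lt_by; rewrite p1 p2 => /ltnW; rewrite leqNgt => /negbTE ->.
Qed.

Lemma diag_potential_diagonal a x b y : e a x -> f b y -> Dg (a, b) (x, y) ->
  d (a, b) (x, y) =
  diag_potential (x, b) + diag_potential (a, y) - diag_potential (a, b) - diag_potential (x, y).
Proof. by move=> eax fby D; rewrite diag_potential_square // /flux D. Qed.

End DiagonalPotential.

Section CartierDivisors.
Variables (T U : finType) (e : rel T) (f : rel U) (Dg : rel (T * U)).
Hypotheses (e_sym : symmetric e) (e_irr : irreflexive e).
Hypotheses (f_sym : symmetric f) (f_irr : irreflexive f).
Hypotheses (Dg_sym : symmetric Dg)
  (Dg_square : forall u v, Dg u v -> e u.1 v.1 && f u.2 v.2)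
  (Dg_flip : forall a x b y, e a x -> f b y -> Dg (a, b) (x, y) = ~~ Dg (x, b) (a, y)).
Variables (D : {set T * U} -> int) (loc : T * U -> T * U -> int).
Hypothesis D_loc : forall v r, is_edge e f Dg r -> v \in r -> D r = Div e f Dg (loc v) r.

Definition diagonal_potential (phi : T * U -> int) : Prop :=
  forall a x b y, e a x -> f b y -> Dg (a, b) (x, y) ->
    D [set (a, b); (x, y)] = phi (x, b) + phi (a, y) - phi (a, b) - phi (x, y).

Lemma D_diagonal_loc a x b y : e a x -> f b y -> Dg (a, b) (x, y) ->
  D [set (a, b); (x, y)] = loc (a, b) (x, b) + loc (a, b) (a, y) - loc (a, b) (a, b) - loc (a, b) (x, y).
Proof.
move=> eax fby D0; rewrite (D_loc (v := (a, b))) ?inE ?eqxx //; last first.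
  by apply: is_edge_set2; rewrite /adjD D0 !orbT.
exact: Div_diagonal.
Qed.

Lemma diagonal_potential_tree_right :
  (forall s : seq U, uniq s -> (2 < size s)%N -> ~~ cycle f s) -> exists phi, diagonal_potential phi.
Proof.
move=> f_acyclic; exists (diag_potential f (fun a c => loc (a, c))) => a x b y eax fby D0.
apply: (diag_potential_diagonal (d := fun p q => D [set p; q])) eax fby D0 => // [p q|{}a {}x c|{}a {}x c].
- by rewrite setUC.
- exact: D_diagonal_loc.
- move=> eax'; have ac : (a, c) \in [set (a, c); (x, c)] by rewrite !inE eqxx.
  have xc : (x, c) \in [set (a, c); (x, c)] by rewrite !inE eqxx orbT.
  have er : is_edge e f Dg [set (a, c); (x, c)] by apply: is_edge_set2; rewrite /adjD /= eqxx eax'.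
  have Div_hor := Div_horizontal e_sym e_irr f_sym f_irr Dg_sym Dg_square Dg_flip _ c eax'.
  by rewrite -!Div_hor -(D_loc er ac) -(D_loc er xc).
Qed.

Lemma diagonal_potential_tree_left :
  (forall s : seq T, uniq s -> (2 < size s)%N -> ~~ cycle e s) -> exists phi, diagonal_potential phi.
Proof.
move=> e_acyclic.
pose Dg' (p q : U * T) := Dg (p.2, p.1) (q.2, q.1).
pose pot (b : U) (a : T) (q : U * T) := loc (a, b) (q.2, q.1).
exists (fun q => diag_potential e pot (q.2, q.1)) => a x b y eax fby D0.
have Dg'_flip b' y' a' x' : f b' y' -> e a' x' -> Dg' (b', a') (y', x') = ~~ Dg' (y', a') (b', x').
  by move=> fby' eax'; rewrite /Dg' /= (Dg_flip eax' (_ : f y' b')) 1?f_sym // (Dg_sym (x', y')) negbK.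
rewrite (diag_potential_diagonal (d := fun p q => D [set (p.2, p.1); (q.2, q.1)]) (Dg := Dg') (pot := pot)
           f_sym e_sym e_irr e_acyclic _ Dg'_flip _ _ _ fby eax D0) /=; first by ring.
- by move=> p q; rewrite /Dg' Dg_sym.
- by move=> p q; rewrite setUC.
- by move=> b' y' a' x' fby' eax' D'; rewrite /= (D_diagonal_loc eax' fby' D'); ring.
move=> b' y' c fby'.
have cb : (c, b') \in [set (c, b'); (c, y')] by rewrite !inE eqxx.
have cy : (c, y') \in [set (c, b'); (c, y')] by rewrite !inE eqxx orbT.
have er : is_edge e f Dg [set (c, b'); (c, y')] by apply: is_edge_set2; rewrite /adjD /= eqxx fby' orbT.
have Div_ver := Div_vertical e_sym e_irr f_sym f_irr Dg_sym Dg_square Dg_flip _ c fby'.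
by rewrite /horizontal_div /= -!Div_ver -(D_loc er cb) -(D_loc er cy).
Qed.

Lemma normalize_on_diagonals phi : is_divisor e f Dg D -> diagonal_potential phi ->
  exists D' : {set T * U} -> int,
    [/\ is_divisor e f Dg D', cartier e f Dg D', lin_equiv e f Dg D D' & vanishes_on_diagonals Dg D'].
Proof.
move=> D_div phi_diag; exists (fun r => D r - Div e f Dg phi r); split.
- by move=> r nr; rewrite D_div // /Div (negbTE nr) subr0.
- by move=> v; exists (fun w => loc v w - phi w) => r er vr; rewrite DivB (D_loc er vr).
- by exists phi => r; rewrite opprB addrC subrK.
- move=> r /existsP[[a b] /existsP[[x y] /andP[D0 /eqP ->]]].
  case/andP: (Dg_square D0) => /= eax fby.
  by rewrite (phi_diag _ _ _ _ eax fby D0) (Div_diagonal e_sym e_irr f_sym f_irr Dg_sym Dg_flip _ eax fby D0) subrr.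
Qed.

End CartierDivisors.

Theorem mainTheorem8 (T U : finType) (e : rel T) (f : rel U) (Dg : rel (T * U)) :
  simple_graph e -> simple_graph f ->
  ((connected_graph e /\ tree f) \/ (tree e /\ connected_graph f)) ->
  triangulation e f Dg ->
  forall D : {set T * U} -> int,
    is_divisor e f Dg D -> cartier e f Dg D ->
    exists D' : {set T * U} -> int,
      [/\ is_divisor e f Dg D', cartier e f Dg D',
          lin_equiv e f Dg D D' & vanishes_on_diagonals Dg D'].
Proof.
move=> [e_sym e_irr] [f_sym f_irr] tree_side [Dg_sym Dg_square Dg_flip] D D_div D_cartier.
have [loc D_loc] := @functional_choice _ _
  (fun v phi => forall r, is_edge e f Dg r -> v \in r -> D r = Div e f Dg phi r) D_cartier.
have [phi phi_diag] : exists phi, diagonal_potential e f Dg D phi.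
  case: tree_side => [[_ [_ f_acyclic]] | [[_ e_acyclic] _]].
  - exact: (diagonal_potential_tree_right e_sym e_irr f_sym f_irr Dg_sym Dg_square Dg_flip D_loc f_acyclic).
  - exact: (diagonal_potential_tree_left e_sym e_irr f_sym f_irr Dg_sym Dg_square Dg_flip D_loc e_acyclic).
exact: (normalize_on_diagonals e_sym e_irr f_sym f_irr Dg_sym Dg_square Dg_flip D_loc D_div phi_diag).
Qed.
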